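(* Assume the Dickson--Hardy--Littlewood conjecture: every admissible tuple $(h_1,\dots,h_k)$ of natural numbers is prime-producing. Then there exists an infinite set $B$ of primes such that $b+b'+1$ is prime for every pair of distinct $b,b' \in B$.
   Context: A tuple $(h_1,\dots,h_k)$ of natural numbers is admissible if for every prime $p$ there is at least one residue class mod $p$ containing none of $h_1,\dots,h_k$. A tuple $(h_1,\dots,h_k)$ is prime-producing if there are infinitely many integers $n$ such that $n+h_1,\dots,n+h_k$ are all prime. *)

From mathcomp Require Import all_boot.

Definition admissible (hs : seq nat) : Prop :=
  forall p : nat, prime p -> exists r : nat, r < p /\ all (fun h => h %% p != r) hs.

(* Infinitely many n with n + h_i all prime (n ranges over nat; since all h_i >= 0,
   only finitely many negative integers n could ever qualify, so this is equivalent). *)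
Definition prime_producing (hs : seq nat) : Prop :=
  forall N : nat, exists n : nat, N <= n /\ all (fun h => prime (n + h)) hs.

Definition DHL : Prop := forall hs : seq nat, admissible hs -> prime_producing hs.

Definition infinite_set (B : nat -> Prop) : Prop :=
  forall N : nat, exists b : nat, N <= b /\ B b.

(** A finite set [bs] of primes greater than 4 with
    pairwise prime [b + c + 1] and no [b = 1 (mod c)] is extended by a prime
    [n] found with DHL applied to [(0, O - 1, b + 1 for b in bs)], where [O] is
    odd and divisible by every odd [d <= L], with [L] bounding [bs].  This tuple
    is admissible: modulo 2 it misses 1, modulo an odd prime [p <= L] it misses
    1 if [p] is not in [bs] and 2 if it is, and for large [p] it is too short to
    cover all residues.  Primality of [n + O - 1] forces [n <> 1 (mod b)], which
    keeps the invariant.  Iterating the extension yields the infinite set. *)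
From mathcomp Require Import all_boot zify.

Lemma exists_missing_residue p (s : seq nat) :
  size s < p -> exists r, r < p /\ all (fun h => h %% p != r) s.
Proof.
move=> size_lt.
case: (boolP (has (fun r => all (fun h => h %% p != r) s) (iota 0 p))).
  by case/hasP=> r; rewrite mem_iota add0n => /andP[_ r_lt] ?; exists r.
move/hasPn=> all_hit; exfalso.
have : size (iota 0 p) <= size [seq h %% p | h <- s].
  apply: uniq_leq_size; first exact: iota_uniq.
  move=> r /all_hit /allPn[h hs]; rewrite negbK => /eqP <-.
  exact: map_f.
by rewrite size_iota size_map leqNgt size_lt.
Qed.

Lemma odd_common_multiple L :
  exists O, odd O /\ forall d, odd d -> d <= L -> d %| O.
Proof.
exists (\prod_(i < L) i.*2.+1); split.
  elim: L => [|L IH]; first by rewrite big_ord0.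
  by rewrite big_ord_recr /= oddM IH /= odd_double.
move=> d d_odd d_le.
have half_lt : d./2 < L by rewrite -(odd_double_half d) d_odd in d_le; lia.
rewrite (bigD1 (Ordinal half_lt)) //= -[d in d %| _](odd_double_half d) d_odd.
exact: dvdn_mulr.
Qed.

Lemma leq_sumn (bs : seq nat) b : b \in bs -> b <= sumn bs.
Proof. elim: bs => [|c bs IH] //=; rewrite inE => /orP[/eqP ->|/IH]; lia. Qed.

(* The condition [b %% c != 1] is what makes the residue 2 free modulo [c]. *)
Definition good (bs : seq nat) : bool :=
  all (fun b => prime b && (4 < b)) bs &&
  all (fun b => all (fun c =>
    (b == c) || prime (b + c + 1) && (b %% c != 1)) bs) bs.

Lemma goodP bs :
  reflect ((forall b, b \in bs -> prime b /\ 4 < b) /\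
           (forall b c, b \in bs -> c \in bs -> b <> c ->
              prime (b + c + 1) /\ b %% c != 1))
          (good bs).
Proof.
apply: (iffP andP) => [[/allP big_primes /allP pairs]|[big_primes pairs]].
  split=> [b /big_primes /andP[] // | b c bs_b bs_c neq_bc].
  move/allP: (pairs b bs_b) => /(_ c bs_c).
  by case: eqP => //= _ /andP[].
split; first by apply/allP=> b /big_primes[-> ->].
apply/allP=> b bs_b; apply/allP=> c bs_c; case: eqP => //= neq_bc.
by case: (pairs b c bs_b bs_c neq_bc) => -> ->.
Qed.

Section Extension.

Variables (bs : seq nat) (L O : nat).
Hypothesis bs_good : good bs.
Hypothesis bs_le : forall {b}, b \in bs -> b <= L.
Hypothesis size_bs_lt : (size bs).+2 < L.
Hypothesis L_gt4 : 4 < L.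
Hypothesis O_odd : odd O.
Hypothesis O_dvd : forall d, odd d -> d <= L -> d %| O.

Let bs_big_prime : forall {b}, b \in bs -> prime b /\ 4 < b.
Proof. by case/goodP: bs_good. Qed.

Let bs_pairs {b c} : b \in bs -> c \in bs -> b <> c ->
  prime (b + c + 1) /\ b %% c != 1.
Proof. by case/goodP: bs_good => _; apply. Qed.

Let bs_odd {b} : b \in bs -> odd b.
Proof.
by case/bs_big_prime=> b_prime b_gt4; case: (even_prime b_prime) => // b2; lia.
Qed.

Definition extension_tuple := [:: 0, O.-1 & [seq b.+1 | b <- bs]].

Lemma modn_predO {p} : prime p -> odd p -> p <= L -> O.-1 %% p = p.-1.
Proof.
move=> p_prime p_odd p_le; rewrite modn_pred ?O_dvd ?odd_gt0 //.
by apply/eqP=> p1; rewrite p1 in p_prime.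
Qed.

Lemma extension_tuple_mod2 : all (fun h => h %% 2 != 1) extension_tuple.
Proof.
rewrite /= modn2 -(odd_double_half O) O_odd /= odd_double /= all_map.
by apply/allP=> b /bs_odd b_odd /=; rewrite modn2 /= b_odd.
Qed.

Lemma extension_tuple_mod_mem p :
  p \in bs -> all (fun h => h %% p != 2) extension_tuple.
Proof.
move=> bs_p; have [p_prime p_gt4] := bs_big_prime bs_p.
rewrite /= (modn_predO p_prime (bs_odd bs_p) (bs_le bs_p)) mod0n all_map.
apply/and3P; split => //; first by apply/eqP; lia.
apply/allP=> b bs_b /=.
have -> : 2 = (1 + 1) %% p by rewrite modn_small //; lia.
rewrite -addn1 eqn_modDr.
case: (eqVneq b p) => [->|neq_bp]; first by rewrite modnn modn_small //; lia.
rewrite (modn_small (_ : 1 < p)); last lia.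
by case: (bs_pairs bs_b bs_p (elimN eqP neq_bp)).
Qed.

Lemma extension_tuple_mod_nmem p :
  prime p -> odd p -> p <= L -> p \notin bs ->
  all (fun h => h %% p != 1) extension_tuple.
Proof.
move=> p_prime p_odd p_le bs'p; have p_gt2 := odd_prime_gt2 p_odd p_prime.
rewrite /= (modn_predO p_prime p_odd p_le) mod0n all_map.
apply/and3P; split => //; first by apply/eqP; lia.
apply/allP=> b bs_b /=.
have -> : 1 = (0 + 1) %% p by rewrite modn_small //; lia.
rewrite -addn1 eqn_modDr mod0n.
apply: contra bs'p => p_dvd_b; have [b_prime _] := bs_big_prime bs_b.
suff -> : p = b by [].
by apply/(prime_nt_dvdP b_prime) => //; apply/eqP; lia.
Qed.

Lemma extension_tuple_admissible : admissible extension_tuple.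
Proof.
move=> p p_prime; case: (leqP p L) => [p_le|p_gt].
  case: (even_prime p_prime) => [->|p_odd].
    by exists 1; split => //; apply: extension_tuple_mod2.
  case: (boolP (p \in bs)) => [bs_p|bs'p].
    exists 2; split; last exact: extension_tuple_mod_mem.
    by have [_] := bs_big_prime bs_p; lia.
  exists 1; split; first exact: prime_gt1.
  exact: extension_tuple_mod_nmem.
by apply: exists_missing_residue; rewrite /= size_map; lia.
Qed.

Lemma good_cons_extension n :
  L < n -> all (fun h => prime (n + h)) extension_tuple -> good (n :: bs).
Proof.
move=> L_lt /allP tuple_prime.
have n_prime : prime n.
  by rewrite -[n]addn0; apply: tuple_prime; rewrite inE eqxx.
have nO_prime : prime (n + O.-1) by apply: tuple_prime; rewrite !inE eqxx orbT.
have nb_prime b : b \in bs -> prime (n + b + 1).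
  move=> bs_b; rewrite -addnA addn1; apply: tuple_prime.
  by rewrite !inE map_f ?orbT.
(* If [n = 1 (mod b)] then [b] divides [n + O - 1], which exceeds [b]. *)
have n_mod b : b \in bs -> n %% b != 1.
  move=> bs_b; have [b_prime b_gt4] := bs_big_prime bs_b.
  apply: contraTneq nO_prime => n_mod_b.
  have b_dvd : b %| n + O.-1.
    rewrite /dvdn -modnDm n_mod_b.
    rewrite (modn_predO b_prime (bs_odd bs_b) (bs_le bs_b)).
    by rewrite add1n prednK ?modnn //; lia.
  apply/negP=> /prime_nt_dvdP /(_ _ b_dvd); have := bs_le bs_b; lia.
apply/goodP; split.
  move=> b; rewrite inE => /orP[/eqP ->|/bs_big_prime //]; split=> //; lia.
move=> b c; rewrite !inE => /orP[/eqP ->|bs_b] /orP[/eqP ->|bs_c] neq_bc //.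
- by split; [apply: nb_prime | apply: n_mod].
- split; first by rewrite (addnC b); apply: nb_prime.
  have [_ b_gt4] := bs_big_prime bs_b; have b_le := bs_le bs_b.
  by rewrite modn_small; lia.
- exact: bs_pairs.
Qed.

End Extension.

Lemma good_extend (dhl : DHL) bs N :
  good bs -> exists n, N <= n /\ good (n :: bs).
Proof.
move=> bs_good; set L := sumn bs + size bs + 5.
have [O [O_odd O_dvd]] := odd_common_multiple L.
have bs_le b : b \in bs -> b <= L by move/leq_sumn; rewrite /L; lia.
have size_lt : (size bs).+2 < L by rewrite /L; lia.
have L_gt4 : 4 < L by rewrite /L; lia.
have adm :=
  extension_tuple_admissible _ _ _ bs_good bs_le size_lt L_gt4 O_odd O_dvd.
have [n [n_ge tuple_prime]] := dhl _ adm (maxn N L.+1).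
exists n; split; first lia.
apply: (good_cons_extension _ _ _ bs_good bs_le size_lt L_gt4 O_odd O_dvd) => //.
lia.
Qed.

Section GreedyChain.

Variable P : pred (seq nat).
Hypothesis P_nil : P [::].
Hypothesis P_extend : forall s N, P s -> exists n, N <= n /\ P (n :: s).

Let next_ex s N : exists n, P s ==> (N <= n) && P (n :: s).
Proof.
case: (boolP (P s)) => Ps; last by exists 0.
by have [n [N_le Pns]] := P_extend s N Ps; exists n; rewrite N_le Pns.
Qed.

Let next s := ex_minn (next_ex s (size s)).

Let chain k := iter k (fun s => next s :: s) [::].

Let next_spec {s} : P s -> size s <= next s /\ P (next s :: s).
Proof.
move=> Ps; rewrite /next; case: ex_minnP => n /implyP/(_ Ps).
by case/andP.
Qed.

Let chain_P k : P (chain k) /\ size (chain k) = k.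
Proof.
elim: k => [|k [P_k size_k]] //=.
by have [_ P_next] := next_spec P_k; rewrite size_k.
Qed.

Let next_chain_ge k : k <= next (chain k).
Proof.
by have [P_k size_k] := chain_P k; case: (next_spec P_k); rewrite size_k.
Qed.

Let chain_sub {k k'} : k <= k' -> {subset chain k <= chain k'}.
Proof.
move/subnK <-; elim: (k' - k) => [|d IH] //= x chain_x.
by rewrite inE IH ?orbT.
Qed.

Lemma greedy_unbounded_set :
  exists B : nat -> Prop, infinite_set B /\
    forall b c, B b -> B c -> exists2 s, P s & (b \in s) && (c \in s).
Proof.
exists (fun b => exists k, b \in chain k); split.
  move=> N; exists (next (chain N)); split; first exact: next_chain_ge.
  by exists N.+1; rewrite /= inE eqxx.
move=> b c [k chain_b] [k' chain_c]; exists (chain (maxn k k')).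
  by case: (chain_P (maxn k k')).
by rewrite (chain_sub (leq_maxl k k') _ chain_b)
           (chain_sub (leq_maxr k k') _ chain_c).
Qed.

End GreedyChain.

Theorem mainTheorem1 :
  DHL ->
  exists B : nat -> Prop,
    infinite_set B /\
    (forall b, B b -> prime b) /\
    (forall b b', B b -> B b' -> b <> b' -> prime (b + b' + 1)).
Proof.
move=> dhl.
have [B [B_inf B_good]] :=
  @greedy_unbounded_set good isT (good_extend dhl).
exists B; split; [exact: B_inf | split].
  move=> b Bb; have [s /goodP[big_primes _] /andP[s_b _]] := B_good b b Bb Bb.
  by case: (big_primes b s_b).
move=> b b' Bb Bb' neq_bb'.
have [s /goodP[_ pairs] /andP[s_b s_b']] := B_good b b' Bb Bb'.
by case: (pairs b b' s_b s_b' neq_bb').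
Qed.
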